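(* Let $n$ be prime, let $c: [n] \to [n]$ be given by $c(i) = i+1$ for $1 \le i < n$ and $c(n) = 1$, and let $w = w(1)\cdots w(n) \in \mathbb{P}^n$ be a nonconstant word. Then for $\pi \in \mathfrak{S}_n$, $\mathrm{cstd}(w) = \pi$ if and only if $w \in A(\pi, S)$ where $S = \mathrm{Des}(\pi c \pi^{-1})$.
   Context: $\mathbb{P} = \{1,2,\ldots\}$ and $\mathfrak{S}_n$ is the set of permutations of $[n]$. A word $w \in \mathbb{P}^n$ is identified with the coloring $i \mapsto w(i)$ of $[n]$. For $1 \le i \le n$ the rotation $r_i(w)$ is the word $w(i)w(i+1)\cdots w(n)w(1)\cdots w(i-1)$. When $n$ is prime and $w$ is nonconstant, the $n$ rotations are pairwise distinct, and the cyclic standardization $\mathrm{cstd}(w)$ is the unique $\pi \in \mathfrak{S}_n$ such that $r_x(w) <_{\mathrm{lex}} r_y(w)$ whenever $\pi(x) < \pi(y)$ (i.e. $\pi(i) = j$ when $r_i(w)$ is the $j$th smallest rotation in lexicographic order). For $\pi \in \mathfrak{S}_n$ and $S \subseteq [n-1]$, $A(\pi,S)$ is the set of words $w$ with $w(\pi^{-1}(1)) \le \cdots \le w(\pi^{-1}(n))$ and $w(\pi^{-1}(i)) < w(\pi^{-1}(i+1))$ for $i \in S$. $\mathrm{Des}(\sigma) = \{i \in [n-1]: \sigma(i) > \sigma(i+1)\}$. *)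

From mathcomp Require Import ssreflect ssrfun ssrbool eqtype ssrnat seq choice fintype finfun bigop prime finset fingroup perm.

Set Implicit Arguments.
Unset Strict Implicit.
Unset Printing Implicit Defensive.

(* Conventions: the paper's [n] = {1,...,n} is represented by 'I_n = {0,...,n-1},
   via the shift k |-> k-1.  A word w in P^n is a function w : 'I_n -> nat with
   all values positive. *)

Fixpoint lexlt (s t : seq nat) : bool :=
  match s, t with
  | [::], [::] => false
  | [::], _ :: _ => true
  | _ :: _, [::] => false
  | x :: s', y :: t' => (x < y) || ((x == y) && lexlt s' t')
  end.

Definition word_seq (n : nat) (w : 'I_n -> nat) : seq nat :=
  [seq w j | j <- enum 'I_n].

(* r_i(w) = w(i) ... w(n) w(1) ... w(i-1); index i : 'I_n is the paper's i+1 *)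
Definition rotation (n : nat) (w : 'I_n -> nat) (i : 'I_n) : seq nat :=
  rot i (word_seq w).

Definition is_cstd (n : nat) (w : 'I_n -> nat) (pi : 'S_n) : bool :=
  [forall x : 'I_n, forall y : 'I_n,
     (pi x < pi y) ==> lexlt (rotation w x) (rotation w y)].

(* cstd(w): the unique permutation with that property (1 if none exists,
   which cannot happen for n prime and w nonconstant) *)
Definition cstd (n : nat) (w : 'I_n -> nat) : 'S_n :=
  odflt 1%g [pick pi : 'S_n | is_cstd w pi].

Definition cyc (n : nat) : 'S_n := perm (@ordS_inj n).

(* Des(sigma) = {i in [n-1] : sigma(i) > sigma(i+1)}, as a predicate on
   (0-based) positions i with i+1 < n *)
Definition Des (n : nat) (sigma : 'S_n) (i : 'I_n) : Prop :=
  exists j : 'I_n, val j = (val i).+1 /\ sigma j < sigma i.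

Definition inA (n : nat) (pi : 'S_n) (S : 'I_n -> Prop) (w : 'I_n -> nat) : Prop :=
  forall i j : 'I_n, val j = (val i).+1 ->
    w ((pi^-1)%g i) <= w ((pi^-1)%g j) /\
    (S i -> w ((pi^-1)%g i) < w ((pi^-1)%g j)).

From mathcomp Require Import ssreflect ssrfun ssrbool eqtype ssrnat seq choice fintype finfun bigop prime finset fingroup perm div.

Set Implicit Arguments.
Unset Strict Implicit.
Unset Printing Implicit Defensive.

(* For n prime the rotations of a nonconstant word are pairwise distinct: if
   r_x(w) = r_y(w) with x <> y, then w is invariant under the shift by d = y - x,
   hence (d being a unit mod n) under the shift by 1, so w is constant.  Thus
   cstd(w) = pi means exactly that pi ranks the rotations lexicographically.
   Since r_{c(x)}(w) is r_x(w) with its first letter moved to the end, comparing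
   r_x(w) with r_y(w) amounts to comparing w(x) with w(y) and then r_{c(x)}(w)
   with r_{c(y)}(w); with sigma = pi c pi^-1 this gives w in A(pi, Des sigma).
   Conversely, if w is in A(pi, Des sigma), the pairs (w(pi^-1 k), sigma(k))
   increase lexicographically in k, and induction on the length of the prefixes
   compared shows that k < l implies r_{pi^-1 k}(w) <=lex r_{pi^-1 l}(w). *)

Lemma lexlt_irr s : lexlt s s = false.
Proof. by elim: s => //= a s ->; rewrite ltnn eqxx. Qed.

Lemma lexlt_trans s t u : lexlt s t -> lexlt t u -> lexlt s u.
Proof.
elim: s t u => [|a s IH] [|b t] [|c u] //=.
case/orP=> [ab|/andP[/eqP-> st]]; case/orP=> [bc|/andP[/eqP<- tu]].
- by rewrite (ltn_trans ab bc).
- by rewrite ab.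
- by rewrite bc.
- by rewrite eqxx (IH _ _ st tu) orbT.
Qed.

Lemma lexlt_asym s t : lexlt s t -> lexlt t s = false.
Proof. by move=> st; apply/negP=> /(lexlt_trans st); rewrite lexlt_irr. Qed.

Lemma lexlt_total s t : size s = size t -> s != t -> lexlt s t || lexlt t s.
Proof.
elim: s t => [|a s IH] [|b t] //= [] /IH {}IH.
by rewrite eqseq_cons negb_and; case: (ltngtP a b) => //= ->.
Qed.

Lemma lexlt_rcons s t a b :
  size s = size t -> lexlt s t -> lexlt (rcons s a) (rcons t b).
Proof.
elim: s t => [|x s IH] [|y t] //= [] /IH {}IH.
by case/orP=> [->//|/andP[-> /IH->]]; rewrite orbT.
Qed.

Definition lexle s t := lexlt s t || (s == t).

Lemma lexle_cons a b s t :
  a <= b -> (a = b -> lexle s t) -> lexle (a :: s) (b :: t).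
Proof.
rewrite leq_eqVlt => /orP[/eqP ab|ab] st; last by rewrite /lexle /= ab.
by move: (st ab); rewrite /lexle /= ab eqxx ltnn eqseq_cons eqxx.
Qed.

Definition lex_pair_le (p q : nat * nat) := p.1 <= q.1 /\ (p.1 = q.1 -> p.2 <= q.2).

Lemma homo_lex_pair n (f : 'I_n -> nat * nat) :
  (forall i j : 'I_n, val j = (val i).+1 -> lex_pair_le (f i) (f j)) ->
  {homo f : i j / i <= j >-> lex_pair_le i j}.
Proof.
case: n f => [f _ []//|n f step i j].
have le_refl p : lex_pair_le p p by [].
have le_trans q p r : lex_pair_le p q -> lex_pair_le q r -> lex_pair_le p r.
  move=> [pq1 pq2] [qr1 qr2]; split; first exact: leq_trans qr1.
  move=> pr; have pq : p.1 = q.1 by apply/eqP; rewrite eqn_leq pq1 pr qr1.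
  by apply: leq_trans (pq2 pq) (qr2 _); rewrite -pq.
have mono := @homo_leq_in _ [pred k | k < n.+1] (fun k => f (inord k)) _
  le_refl le_trans.
rewrite -[f i](congr1 f (inord_val i)) -[f j](congr1 f (inord_val j)).
apply: mono => //=.
- by move=> a b _ bn k /andP[_ /ltn_trans]; apply.
- by move=> k _ kn; apply: step; rewrite /= !inordK // ltnW.
- exact: ltn_ord.
- exact: ltn_ord.
Qed.

Section Rotations.

Variables (n : nat) (w : 'I_n -> nat).
Local Notation c := (cyc n).
Local Notation r := (rotation w).

Lemma val_cycX t x : val ((c ^+ t)%g x) = (x + t) %% n.
Proof.
elim: t => [|t IH]; first by rewrite expg0 perm1 addn0 modn_small.
by rewrite expgSr permM /cyc permE /= IH -addn1 modnDml addn1 addnS.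
Qed.

Lemma cycX_transitive x y : exists t, (c ^+ t)%g x = y.
Proof.
exists (y + (n - x)); apply: val_inj.
by rewrite val_cycX addnCA subnKC ?modnDr ?modn_small // ltnW.
Qed.

Lemma cycXC s t x : (c ^+ s)%g ((c ^+ t)%g x) = (c ^+ t)%g ((c ^+ s)%g x).
Proof. by rewrite -!permM -!expgD addnC. Qed.

Lemma size_word_seq : size (word_seq w) = n.
Proof. by rewrite size_map size_enum_ord. Qed.

Lemma size_rotation x : size (r x) = n.
Proof. by rewrite size_rot size_word_seq. Qed.

Lemma rotation_head x : r x = w x :: behead (r x).
Proof.
rewrite /rotation /rot (drop_nth (w x)) ?size_word_seq //=.
by rewrite (nth_map x) ?size_enum_ord // nth_ord_enum.
Qed.

Lemma rotation_cyc x : r (c x) = rcons (behead (r x)) (w x).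
Proof.
suff -> : r (c x) = rot 1 (r x) by rewrite {1}rotation_head rot1_cons.
rewrite /cyc permE /rotation -rotD /=; last by rewrite size_word_seq.
have := ltn_ord x; rewrite add1n leq_eqVlt => /orP[/eqP e|lt].
- by rewrite e modnn rot0 rot_oversize ?size_word_seq.
- by rewrite modn_small.
Qed.

Lemma take_rotation_cyc m x : m < n -> take m.+1 (r x) = w x :: take m (r (c x)).
Proof.
move=> mn; rewrite {1}rotation_head /= rotation_cyc -cats1 takel_cat //.
by rewrite size_behead size_rotation -ltnS (ltn_predK mn).
Qed.

Lemma rotation_eq_cycX x y t : r x = r y -> r ((c ^+ t)%g x) = r ((c ^+ t)%g y).
Proof.
move=> rxy; elim: t => [|t IH]; first by rewrite expg0 !perm1.
rewrite expgSr !permM !rotation_cyc IH.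
by move: IH; rewrite rotation_head [in RHS]rotation_head => -[->].
Qed.

Lemma cycX_invariant_mul d :
  (forall z, w ((c ^+ d)%g z) = w z) -> forall k z, w ((c ^+ (k * d))%g z) = w z.
Proof.
move=> wd; elim=> [|k IH] z; first by rewrite mul0n expg0 perm1.
by rewrite mulSn expgD permM IH wd.
Qed.

Lemma cyc_invariant_coprime d :
  coprime d n -> (forall z, w ((c ^+ d)%g z) = w z) -> forall z, w (c z) = w z.
Proof.
move=> dn wd z; have [a _] := Bezoutr d (leq_ltn_trans (leq0n z) (ltn_ord z)).
rewrite (eqP dn) => n_dvd.
(* [n %| 1 + a * d], so [c ^+ (a * d)] is the inverse of [c]. *)
have cycX_id : (c ^+ (a * d).+1)%g z = z.
  apply: val_inj; rewrite val_cycX -modnDmr -add1n (eqP n_dvd) addn0 modn_small //.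
by rewrite -(cycX_invariant_mul wd a) -permM -expgS cycX_id.
Qed.

Lemma cyc_invariant_const : (forall z, w (c z) = w z) -> forall x y, w x = w y.
Proof.
move=> wc x y; have [t <-] := cycX_transitive x y.
by rewrite -[t]muln1 cycX_invariant_mul // => z; rewrite expg1.
Qed.

Lemma rotation_inj : prime n -> (exists i j, w i != w j) -> injective r.
Proof.
move=> n_prime [i [j wij]] x y rxy; have [d dxy] := cycX_transitive x y.
have wd z : w ((c ^+ d)%g z) = w z.
  have [t <-] := cycX_transitive x z; rewrite cycXC dxy.
  have := rotation_eq_cycX t rxy.
  by rewrite rotation_head [in RHS]rotation_head => -[->].
apply/eqP; apply: contraTT wij => xy; apply/negPn/eqP.
apply: cyc_invariant_const (cyc_invariant_coprime _ wd) i j.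
rewrite coprime_sym prime_coprime //; apply: contra xy => n_dvd_d.
rewrite -dxy; apply/eqP/val_inj.
by rewrite val_cycX -modnDmr (eqP n_dvd_d) addn0 modn_small.
Qed.

End Rotations.

Lemma card_ord_lt n a : a <= n -> #|[set k : 'I_n | k < a]| = a.
Proof.
move=> an; have widen_inj : injective (widen_ord an) by move=> u v [] /val_inj.
rewrite -[RHS](card_ord a) -(card_imset _ widen_inj).
congr #|pred_of_set _|; apply/setP => k; rewrite inE.
apply/idP/imsetP => [ka|[[j ja] _ ->] //].
by exists (Ordinal ka); last apply: val_inj.
Qed.

Section CyclicStandardization.

Variables (n : nat) (w : 'I_n -> nat).
Local Notation r := (rotation w).

Lemma is_cstd_ltE p : is_cstd w p -> forall x y, lexlt (r x) (r y) = (p x < p y).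
Proof.
move=> /forallP p_cstd x y.
have lt_lexlt u v : p u < p v -> lexlt (r u) (r v).
  by move=> uv; have /forallP/(_ v)/implyP := p_cstd u; apply.
case: ltngtP => [xy|yx|/val_inj/perm_inj ->]; first exact: lt_lexlt.
- exact/lexlt_asym/lt_lexlt.
- exact: lexlt_irr.
Qed.

Definition lex_rank x := #|[set y | lexlt (r y) (r x)]|.

Lemma is_cstd_rank p x : is_cstd w p -> val (p x) = lex_rank x.
Proof.
move=> p_cstd; rewrite /lex_rank.
have -> : [set y | lexlt (r y) (r x)] = p @^-1: [set k : 'I_n | k < p x].
  by apply/setP => y; rewrite !inE (is_cstd_ltE p_cstd).
by rewrite card_preimset ?card_ord_lt 1?ltnW //; apply: perm_inj.
Qed.

Lemma is_cstd_uniq p q : is_cstd w p -> is_cstd w q -> p = q.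
Proof. by move=> Hp Hq; apply/permP => x; apply: val_inj; rewrite !is_cstd_rank. Qed.

Lemma lex_rank_lt x y : lexlt (r y) (r x) -> lex_rank y < lex_rank x.
Proof.
move=> yx; apply/proper_card/properP; split.
  by apply/subsetP => z; rewrite !inE => /lexlt_trans; apply.
by exists y; rewrite !inE ?yx ?lexlt_irr.
Qed.

Lemma lex_rank_ltn x : lex_rank x < n.
Proof.
rewrite -[n]card_ord -cardsT; apply/proper_card/properP; split.
  exact: subsetT.
by exists x; rewrite !inE ?lexlt_irr.
Qed.

Hypothesis r_inj : injective r.

Lemma lexlt_rotation_total x y : x != y -> lexlt (r x) (r y) || lexlt (r y) (r x).
Proof.
move=> xy; apply: lexlt_total; first by rewrite !size_rotation.
by apply: contra xy => /eqP /r_inj ->.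
Qed.

Lemma lex_rank_inj : injective (fun x => Ordinal (lex_rank_ltn x)).
Proof.
move=> x y [] rank_xy; apply/eqP; apply: contraT => /lexlt_rotation_total.
by case/orP => /lex_rank_lt; rewrite rank_xy ltnn.
Qed.

Lemma is_cstd_exists : exists p, is_cstd w p.
Proof.
exists (perm lex_rank_inj); apply/forallP => x; apply/forallP => y; apply/implyP.
rewrite !permE /= => lt_xy.
have /lexlt_rotation_total : x != y by apply: contraTneq lt_xy => ->; rewrite ltnn.
by case/orP => // /lex_rank_lt; rewrite ltnNge (ltnW lt_xy).
Qed.

Lemma cstdE p : cstd w = p <-> is_cstd w p.
Proof.
rewrite /cstd; case: pickP => [q q_cstd|no_cstd].
  by split=> [<- //|]; apply: is_cstd_uniq.
by have [q] := is_cstd_exists; rewrite no_cstd.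
Qed.

End CyclicStandardization.

Section Descents.

Variables (n : nat) (w : 'I_n -> nat) (pi : 'S_n).
Local Notation c := (cyc n).
Local Notation r := (rotation w).
Local Notation sigma := (pi^-1 * c * pi)%g.

Lemma conj_cycE k : sigma k = pi (c ((pi^-1)%g k)).
Proof. by rewrite !permM. Qed.

Lemma conj_cycK k : (pi^-1)%g (sigma k) = c ((pi^-1)%g k).
Proof. by rewrite conj_cycE permK. Qed.

Lemma is_cstd_inA : is_cstd w pi -> inA pi (Des sigma) w.
Proof.
move=> pi_cstd i j ij; set a := (pi^-1)%g i; set b := (pi^-1)%g j.
have : lexlt (r a) (r b) by rewrite (is_cstd_ltE pi_cstd) !permKV ij.
rewrite (rotation_head w a) (rotation_head w b) /= => heads.
split; first by case/orP: heads => [/ltnW | /andP[/eqP-> _]].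
case=> j' [j'i]; have -> : j' = j by apply: val_inj; rewrite j'i ij.
rewrite !conj_cycE -/a -/b -(is_cstd_ltE pi_cstd) !rotation_cyc.
case/orP: heads => [-> // | /andP[/eqP wab tails]].
have size_tails : size (behead (r a)) = size (behead (r b)).
  by rewrite !size_behead !size_rotation.
by rewrite wab lexlt_asym // lexlt_rcons.
Qed.

Hypothesis pi_inA : inA pi (Des sigma) w.

Lemma inA_lex_pair_step i j : val j = (val i).+1 ->
  lex_pair_le (w ((pi^-1)%g i), val (sigma i)) (w ((pi^-1)%g j), val (sigma j)).
Proof.
move=> ij; have [le_ij lt_des] := pi_inA ij.
split=> //= eq_ij; rewrite leqNgt; apply/negP => des.
by have := lt_des (ex_intro _ j (conj ij des)); rewrite eq_ij ltnn.
Qed.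

Lemma inA_lexle_take m : m <= n -> forall i j : 'I_n, i <= j ->
  lexle (take m (r ((pi^-1)%g i))) (take m (r ((pi^-1)%g j))).
Proof.
have mono := homo_lex_pair inA_lex_pair_step.
elim: m => [|m IH] mn i j ij; first by rewrite !take0 /lexle eqxx orbT.
have [le_w eq_sigma] := mono i j ij.
rewrite !take_rotation_cyc //; apply: lexle_cons => // /eq_sigma sigma_ij.
by rewrite -!conj_cycK; apply: IH (ltnW mn) _ _ sigma_ij.
Qed.

Lemma inA_is_cstd : injective r -> is_cstd w pi.
Proof.
move=> r_inj; apply/forallP => x; apply/forallP => y; apply/implyP => lt_xy.
have := inA_lexle_take (leqnn n) (ltnW lt_xy).
rewrite !take_oversize ?size_rotation // !permK.
by case/orP => // /eqP /r_inj xy; move: lt_xy; rewrite xy ltnn.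
Qed.

End Descents.

Theorem lemma2p2 (n : nat) (w : 'I_n -> nat) (pi : 'S_n) :
  prime n ->
  (forall i, 0 < w i) ->
  (exists i j, w i != w j) ->
  cstd w = pi <->
  inA pi (Des (pi^-1 * cyc n * pi)%g) w.
Proof.
move=> n_prime _ nonconstant.
have r_inj := rotation_inj n_prime nonconstant.
apply: iff_trans (cstdE r_inj pi) _.
by split=> [/is_cstd_inA | /inA_is_cstd]; apply.
Qed.
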